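(* Let $\Pi=(P,\mathcal{L})$ be an $n$-dimensional projective space and $\Pi'=(P',\mathcal{L}')$ an $n$-dimensional linear space satisfying the exchange axiom, and let $f$ be a strong embedding of $\Pi$ to $\Pi'$. If for some $k\in\{0,\dots,n-1\}$ the mapping $G_{k}(f):\mathcal{G}_k(\Pi)\to\mathcal{G}_k(\Pi')$, $S\mapsto\overline{f(S)}$, is bijective, then $f$ is a collineation.
   Context: A linear space $\Pi=(P,\mathcal{L})$ is a set $P$ of points with a family $\mathcal{L}$ of proper subsets (lines) such that each line has at least two points and any two distinct points $p,q$ lie on exactly one line $pq$. Points are collinear if some line contains them. A subspace is a set $S\subset P$ with $pq\subset S$ for all distinct $p,q\in S$; $\overline{X}$ is the smallest subspace containing $X$. A set $X$ is independent if $\overline{X}$ is not spanned by a proper subset of $X$. A subspace is $m$-dimensional if $m+1$ is the smallest number of points spanning it. Exchange axiom: for every $X\subset P$ and $p_1,p_2\in P\setminus\overline{X}$, $p_2\in\overline{X\cup\{p_1\}}$ implies $p_1\in\overline{X\cup\{p_2\}}$. A projective space is a linear space in which every $2$-dimensional subspace is a projective plane (any two of its lines meet and each line has at least three points). $\mathcal{G}_k(\Pi)$ is the set of $k$-dimensional subspaces. A strong embedding is an injection $f:P\to P'$ sending collinear triples to collinear triples, non-collinear triples to non-collinear triples and independent sets to independent sets; then $\dim\overline{f(S)}=\dim S$ for every subspace $S$. A collineation is a bijection $f:P\to P'$ with $f(\mathcal{L})=\mathcal{L}'$. *)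

From Stdlib Require Import List.
Set Implicit Arguments.

Definition subset {P : Type} (A B : P -> Prop) : Prop := forall x, A x -> B x.
Definition set_eq {P : Type} (A B : P -> Prop) : Prop := forall x, A x <-> B x.

Definition linear_space {P : Type} (L : (P -> Prop) -> Prop) : Prop :=
  (forall l, L l -> exists x, ~ l x) /\
  (forall l, L l -> exists p q, p <> q /\ l p /\ l q) /\
  (forall p q : P, p <> q ->
     exists l, L l /\ l p /\ l q /\
       forall l', L l' -> l' p -> l' q -> set_eq l' l).

Definition collinear {P : Type} (L : (P -> Prop) -> Prop) (a b c : P) : Prop :=
  exists l, L l /\ l a /\ l b /\ l c.

Definition subspace {P : Type} (L : (P -> Prop) -> Prop) (S : P -> Prop) : Prop :=
  forall l p q, L l -> p <> q -> S p -> S q -> l p -> l q -> subset l S.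

Definition closure {P : Type} (L : (P -> Prop) -> Prop) (X : P -> Prop) : P -> Prop :=
  fun x => forall S, subspace L S -> subset X S -> S x.

Definition independent {P : Type} (L : (P -> Prop) -> Prop) (X : P -> Prop) : Prop :=
  forall Y, subset Y X -> set_eq (closure L Y) (closure L X) -> subset X Y.

Definition dimension {P : Type} (L : (P -> Prop) -> Prop) (S : P -> Prop) (m : nat)
  : Prop :=
  (exists s : list P, NoDup s /\ length s = Datatypes.S m /\
      set_eq (closure L (fun x => In x s)) S) /\
  (forall s : list P, set_eq (closure L (fun x => In x s)) S -> Datatypes.S m <= length s).

Definition whole (P : Type) : P -> Prop := fun _ => True.

Definition exchange_axiom {P : Type} (L : (P -> Prop) -> Prop) : Prop :=
  forall (X : P -> Prop) (p1 p2 : P),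
    ~ closure L X p1 -> ~ closure L X p2 ->
    closure L (fun x => X x \/ x = p1) p2 ->
    closure L (fun x => X x \/ x = p2) p1.

Definition projective_space {P : Type} (L : (P -> Prop) -> Prop) : Prop :=
  linear_space L /\
  forall S, subspace L S -> dimension L S 2 ->
    (forall l1 l2, L l1 -> L l2 -> subset l1 S -> subset l2 S ->
        exists p, l1 p /\ l2 p) /\
    (forall l, L l -> subset l S ->
        exists a b c, l a /\ l b /\ l c /\ a <> b /\ a <> c /\ b <> c).

Definition image {P P' : Type} (f : P -> P') (X : P -> Prop) : P' -> Prop :=
  fun y => exists x, X x /\ f x = y.

Definition strong_embedding {P P' : Type} (L : (P -> Prop) -> Prop)
  (L' : (P' -> Prop) -> Prop) (f : P -> P') : Prop :=
  (forall x y, f x = f y -> x = y) /\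
  (forall a b c, collinear L a b c -> collinear L' (f a) (f b) (f c)) /\
  (forall a b c, ~ collinear L a b c -> ~ collinear L' (f a) (f b) (f c)) /\
  (forall X, independent L X -> independent L' (image f X)).

Definition Gk_bijective {P P' : Type} (L : (P -> Prop) -> Prop)
  (L' : (P' -> Prop) -> Prop) (f : P -> P') (k : nat) : Prop :=
  (forall S1 S2, subspace L S1 -> dimension L S1 k ->
                 subspace L S2 -> dimension L S2 k ->
     set_eq (closure L' (image f S1)) (closure L' (image f S2)) -> set_eq S1 S2) /\
  (forall T, subspace L' T -> dimension L' T k ->
     exists S, subspace L S /\ dimension L S k /\
       set_eq (closure L' (image f S)) T).

Definition collineation {P P' : Type} (L : (P -> Prop) -> Prop)
  (L' : (P' -> Prop) -> Prop) (f : P -> P') : Prop :=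
  (forall x y, f x = f y -> x = y) /\ (forall y, exists x, f x = y) /\
  (forall l, L l -> exists l', L' l' /\ set_eq (image f l) l') /\
  (forall l', L' l' -> exists l, L l /\ set_eq (image f l) l').

(* A projective space satisfies the exchange axiom: because any two lines of a
   plane meet, the subspace spanned by a subspace H and a point a outside it is
   the cone of lines joining a to H.  So both spaces carry a Steinitz dimension
   theory, and a strong embedding preserves dimensions of subspaces.
   Surjectivity of G_k(f) descends from k+1 to k: a k-subspace V' of the target
   is the meet of two (k+1)-subspaces V' + a' and V' + b' spanning a
   (k+2)-subspace; their preimages span a (k+2)-subspace as well, so they meet
   in a k-subspace, whose image spans V'.  For k = 0 this says that f is onto,
   and a surjective strong embedding maps lines onto lines. *)

From Stdlib Require Import List Lia Classical FunctionalExtensionality PropExtensionality.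
Import ListNotations.

Lemma set_ext {T : Type} (A B : T -> Prop) : set_eq A B -> A = B.
Proof. intro H. extensionality x. apply propositional_extensionality, H. Qed.

Definition list_set {T : Type} (s : list T) : T -> Prop := fun v => In v s.

Definition adjoin {T : Type} (X : T -> Prop) (a : T) : T -> Prop := fun v => X v \/ v = a.

Lemma NoDup_remove_elem {T : Type} {t : list T} {x : T} :
  NoDup t -> In x t ->
  exists t', NoDup t' /\ length t = S (length t') /\ forall v, In v t' <-> In v t /\ v <> x.
Proof.
  intros Ht Hx. destruct (in_split x t Hx) as [t1 [t2 ->]].
  exists (t1 ++ t2). split; [exact (NoDup_remove_1 _ _ _ Ht)|]. split.
  - rewrite !length_app. simpl. lia.
  - pose proof (NoDup_remove_2 _ _ _ Ht) as Hx12. intro v. rewrite !in_app_iff. simpl.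
    split.
    + intros Hv. split; [tauto|]. intros ->. rewrite <- in_app_iff in Hv. contradiction.
    + intros [[Hv | [<- | Hv]] Hne]; tauto.
Qed.

Definition free {P : Type} (L : (P -> Prop) -> Prop) (t : list P) : Prop :=
  NoDup t /\ forall x, In x t -> ~ closure L (fun y => In y t /\ y <> x) x.

Section Closure.

Context {P : Type} {L : (P -> Prop) -> Prop}.

Lemma subset_closure X : subset X (closure L X).
Proof. intros x Hx U _ HXU. apply HXU, Hx. Qed.

Lemma closure_subspace X : subspace L (closure L X).
Proof.
  intros l p q Hl Hpq Hp Hq Hlp Hlq x Hx U HU HXU.
  exact (HU l p q Hl Hpq (Hp U HU HXU) (Hq U HU HXU) Hlp Hlq x Hx).
Qed.

Lemma closure_min {X U} : subspace L U -> subset X U -> subset (closure L X) U.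
Proof. intros HU HXU x Hx. apply Hx; assumption. Qed.

Lemma closure_sub_closure {X Y} : subset X (closure L Y) -> subset (closure L X) (closure L Y).
Proof. apply closure_min, closure_subspace. Qed.

Lemma closure_mono {X Y} : subset X Y -> subset (closure L X) (closure L Y).
Proof. intros HXY. apply closure_sub_closure. intros x Hx. apply subset_closure, HXY, Hx. Qed.

Lemma closure_id {U} : subspace L U -> closure L U = U.
Proof.
  intros HU. apply set_ext. intro x. split.
  - apply closure_min; [exact HU | intros y Hy; exact Hy].
  - apply subset_closure.
Qed.

Lemma closure_eq {X Y} :
  subset X (closure L Y) -> subset Y (closure L X) -> closure L X = closure L Y.
Proof.
  intros HXY HYX. apply set_ext. intro x.
  split; [apply closure_sub_closure, HXY | apply closure_sub_closure, HYX].
Qed.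

Lemma closure_cons (t : list P) y :
  closure L (list_set (y :: t)) = closure L (adjoin (closure L (list_set t)) y).
Proof.
  apply closure_eq.
  - intros v [<- | Hv]; apply subset_closure; [right | left]; [reflexivity|].
    apply subset_closure, Hv.
  - intros v [Hv | ->].
    + revert Hv. apply closure_mono. intros w Hw. right. exact Hw.
    + apply subset_closure. left. reflexivity.
Qed.

Lemma subspace_inter {U V} : subspace L U -> subspace L V -> subspace L (fun v => U v /\ V v).
Proof.
  intros HU HV l p q Hl Hpq [Up Vp] [Uq Vq] Hlp Hlq x Hx.
  split; [exact (HU l p q Hl Hpq Up Uq Hlp Hlq x Hx) | exact (HV l p q Hl Hpq Vp Vq Hlp Hlq x Hx)].
Qed.

Lemma subspace_point x : subspace L (fun v => v = x).
Proof. intros l p q _ Hpq Hp Hq. congruence. Qed.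

Lemma closure_nil : subset (closure L (list_set (@nil P))) (fun _ => False).
Proof. apply closure_min; [intros l p q _ _ [] | intros v []]. Qed.

Lemma dimension_nonempty {U m} : dimension L U m -> exists x, U x.
Proof.
  intros [[[|x s] [_ [Hl Hs]]] _]; [discriminate|].
  exists x. apply (proj1 (Hs x)), subset_closure. left. reflexivity.
Qed.

Lemma dimension_unique {U m m'} : dimension L U m -> dimension L U m' -> m = m'.
Proof.
  intros [[s [_ [Hl Hs]]] Hmin] [[s' [_ [Hl' Hs']]] Hmin'].
  specialize (Hmin s' Hs'). specialize (Hmin' s Hs). lia.
Qed.

Lemma dimension_point x : dimension L (fun v => v = x) 0.
Proof.
  split.
  - exists [x]. split; [repeat constructor; intros []|]. split; [reflexivity|].
    intro v. split.
    + apply (closure_min (subspace_point x)). intros w [<- | []]. reflexivity.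
    + intros ->. apply subset_closure. left. reflexivity.
  - intros [|y s] Hs; simpl; [|lia].
    exfalso. exact (closure_nil x (proj2 (Hs x) eq_refl)).
Qed.

Lemma spanning_list_minimal {U m s x} :
  dimension L U m -> NoDup s -> length s = S m -> closure L (list_set s) = U -> In x s ->
  ~ subset (list_set s) (closure L (fun y => In y s /\ y <> x)).
Proof.
  intros [_ Hmin] Hs Hl HU Hx Hsub.
  destruct (NoDup_remove_elem Hs Hx) as [s' [_ [Hl' Hs']]].
  enough (S m <= length s') by lia.
  apply Hmin. rewrite <- HU. intro v. split.
  - apply closure_mono. intros w Hw. apply Hs', Hw.
  - apply closure_sub_closure. intros w Hw. apply Hsub in Hw. revert Hw.
    apply closure_mono. intros y Hy. apply Hs', Hy.
Qed.

Lemma spanning_list_independent {U m s} :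
  dimension L U m -> NoDup s -> length s = S m -> closure L (list_set s) = U ->
  independent L (list_set s).
Proof.
  intros HU Hs Hl Hspan Y HYs HY x Hx. apply NNPP. intro HxY.
  apply (spanning_list_minimal HU Hs Hl Hspan Hx).
  intros y Hy. apply subset_closure, (proj2 (HY y)) in Hy. revert Hy. apply closure_mono.
  intros w Hw. split; [apply HYs, Hw | intros ->; contradiction].
Qed.

Lemma independent_free t : NoDup t -> independent L (list_set t) -> free L t.
Proof.
  intros Ht Hind. split; [exact Ht|]. intros x Hx Hcl.
  assert (HtY : subset (list_set t) (fun y => In y t /\ y <> x)).
  { apply Hind; [intros y [Hy _]; exact Hy|]. intro v. split.
    - apply closure_mono. intros y [Hy _]. exact Hy.
    - apply closure_sub_closure. intros y Hy.
      destruct (classic (y = x)) as [-> | Hyx]; [exact Hcl|].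
      apply subset_closure. split; assumption. }
  exact (proj2 (HtY x Hx) eq_refl).
Qed.

Lemma dimension_basis {U m} :
  dimension L U m -> exists t, free L t /\ length t = S m /\ closure L (list_set t) = U.
Proof.
  intros HU. pose proof HU as [[s [Hs [Hl Hspan]]] _]. apply set_ext in Hspan.
  exists s. split; [|split; assumption].
  exact (independent_free s Hs (spanning_list_independent HU Hs Hl Hspan)).
Qed.

Lemma dimension_lt_whole {n V k} :
  dimension L (@whole P) n -> dimension L V k -> k < n -> exists a, ~ V a.
Proof.
  intros Hn HV Hk. apply NNPP. intro Hall.
  assert (V = @whole P) as ->.
  { apply set_ext. intro x. split; [intros _; exact I|].
    intros _. apply NNPP. intro Hx. apply Hall. exists x. exact Hx. }
  pose proof (dimension_unique Hn HV). lia.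
Qed.

End Closure.

Section Exchange.

Context {P : Type} {L : (P -> Prop) -> Prop}.
Hypothesis EX : exchange_axiom L.

Lemma free_cons {t y} : free L t -> ~ closure L (list_set t) y -> free L (y :: t).
Proof.
  intros [Ht Hfree] Hy. split.
  - constructor; [intro Hyt; apply Hy, subset_closure, Hyt | exact Ht].
  - intros x [<- | Hx] Hcl.
    + apply Hy. revert Hcl. apply closure_mono. intros v [[<- | Hv] Hne]; [congruence | exact Hv].
    + destruct (classic (x = y)) as [-> | Hxy]; [apply Hy, subset_closure, Hx|].
      set (X := fun v => In v t /\ v <> x).
      assert (HyX : ~ closure L X y).
      { intro HyX. apply Hy. revert HyX. apply closure_mono. intros v [Hv _]. exact Hv. }
      assert (HxXy : closure L (adjoin X y) x).
      { revert Hcl. apply closure_mono.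
        intros v [[<- | Hv] Hne]; [right; reflexivity | left; split; assumption]. }
      apply Hy. generalize (EX X y x HyX (Hfree x Hx) HxXy). apply closure_mono.
      intros v [[Hv _] | ->]; assumption.
Qed.

(* Steinitz exchange, with [t] free over the auxiliary set [Z] so that the
   induction on [s] can move the exchanged point of [t] into [Z]. *)
Lemma free_over_length_le (s : list P) : forall (Z : P -> Prop) (t : list P),
  NoDup t -> (forall x, In x t -> ~ closure L (fun y => Z y \/ In y t /\ y <> x) x) ->
  subset (list_set t) (closure L (fun y => Z y \/ In y s)) -> length t <= length s.
Proof.
  induction s as [|y s IH]; intros Z t Ht Hfree Hspan.
  - destruct t as [|x t]; [simpl; lia|]. exfalso.
    apply (Hfree x (or_introl eq_refl)). generalize (Hspan x (or_introl eq_refl)).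
    apply closure_mono. intros v [Hv | []]. left. exact Hv.
  - set (X := fun v => Z v \/ In v s).
    destruct (classic (subset (list_set t) (closure L X))) as [HtX | HtX].
    { specialize (IH Z t Ht Hfree HtX). simpl. lia. }
    apply not_all_ex_not in HtX as [x HtX]. apply imply_to_and in HtX as [Hx HxX].
    assert (HyX : ~ closure L X y).
    { intro HyX. apply HxX. generalize (Hspan x Hx). apply closure_sub_closure.
      intros v [Hv | [<- | Hv]]; [| exact HyX |]; apply subset_closure; unfold X; tauto. }
    assert (HyXx : closure L (adjoin X x) y).
    { apply (EX X y x HyX HxX). generalize (Hspan x Hx). apply closure_mono.
      intros v [Hv | [<- | Hv]]; unfold adjoin, X; tauto. }
    destruct (NoDup_remove_elem Ht Hx) as [t' [Ht' [Hlen Hin]]].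
    rewrite Hlen. simpl. apply le_n_S, (IH (adjoin Z x) t' Ht').
    + intros w Hw Hcl. apply (Hfree w (proj1 (proj1 (Hin w) Hw))). revert Hcl.
      apply closure_mono. intros v [[Hv | ->] | [Hv Hne]]; [left; exact Hv | right | right].
      * split; [exact Hx|]. intros ->. exact (proj2 (proj1 (Hin w) Hw) eq_refl).
      * split; [apply Hin, Hv | exact Hne].
    + intros w Hw. generalize (Hspan w (proj1 (proj1 (Hin w) Hw))).
      apply closure_sub_closure. intros v [Hv | [<- | Hv]].
      * apply subset_closure. left. left. exact Hv.
      * revert HyXx. apply closure_mono. intros u. unfold adjoin, X. tauto.
      * apply subset_closure. right. exact Hv.
Qed.

Lemma free_length_le {t s} :
  free L t -> subset (list_set t) (closure L (list_set s)) -> length t <= length s.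
Proof.
  intros [Ht Hfree] Hspan. apply (free_over_length_le s (fun _ => False) t Ht).
  - intros x Hx Hcl. apply (Hfree x Hx). revert Hcl. apply closure_mono.
    intros v [[] | Hv]. exact Hv.
  - intros x Hx. generalize (Hspan x Hx). apply closure_mono. intros v Hv. right. exact Hv.
Qed.

Lemma dimension_of_free {U m t} :
  free L t -> length t = S m -> closure L (list_set t) = U -> dimension L U m.
Proof.
  intros Ht Hl Hspan. split.
  - exists t. split; [apply Ht|]. split; [exact Hl|]. rewrite <- Hspan. intro v. reflexivity.
  - intros s Hs. rewrite <- Hl. apply (free_length_le Ht).
    intros x Hx. apply (proj2 (Hs x)). rewrite <- Hspan. apply subset_closure, Hx.
Qed.

Lemma free_length_le_dimension {U m t} :
  dimension L U m -> free L t -> subset (list_set t) U -> length t <= S m.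
Proof.
  intros [[s [_ [Hl Hs]]] _] Ht HtU. rewrite <- Hl. apply (free_length_le Ht).
  intros x Hx. apply (proj2 (Hs x)), HtU, Hx.
Qed.

Lemma free_spans {U m t} :
  dimension L U m -> subspace L U -> free L t -> subset (list_set t) U -> length t = S m ->
  closure L (list_set t) = U.
Proof.
  intros HU HUs Ht HtU Hl. apply set_ext. intro y. split; [apply closure_min; assumption|].
  intro Hy. apply NNPP. intro Hny.
  assert (Hlen : length (y :: t) <= S m).
  { apply (free_length_le_dimension HU (free_cons Ht Hny)). intros v [<- | Hv]; auto. }
  simpl in Hlen. lia.
Qed.

Lemma subspace_basis {n V} :
  dimension L (@whole P) n -> subspace L V -> exists t, free L t /\ closure L (list_set t) = V.
Proof.
  intros Hn HV.
  assert (Hgrow : forall k t, S n - length t <= k -> free L t -> subset (list_set t) V ->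
                  exists t', free L t' /\ closure L (list_set t') = V).
  { induction k as [|k IH]; intros t Hk Ht HtV;
      destruct (classic (subset V (closure L (list_set t)))) as [HVt | HVt].
    1, 3: exists t; split; [exact Ht|]; apply set_ext; intro x;
          split; [apply closure_min; assumption | apply HVt].
    all: apply not_all_ex_not in HVt as [y Hy]; apply imply_to_and in Hy as [HVy Hty].
    all: assert (Hyt : free L (y :: t)) by exact (free_cons Ht Hty).
    all: assert (Hlen : length (y :: t) <= S n)
           by (apply (free_length_le_dimension Hn Hyt); intros v _; exact I).
    all: simpl length in Hlen.
    - lia.
    - apply (IH (y :: t)); [simpl length; lia | exact Hyt | intros v [<- | Hv]; auto]. }
  apply (Hgrow _ [] (le_n _)); [split; [constructor | intros x []] | intros x []].
Qed.

Lemma subspace_dimension {n V x} :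
  dimension L (@whole P) n -> subspace L V -> V x -> exists d, dimension L V d.
Proof.
  intros Hn HV Hx. destruct (subspace_basis Hn HV) as [[|y t] [Ht Hspan]].
  - exfalso. rewrite <- Hspan in Hx. exact (closure_nil x Hx).
  - exists (length t). exact (dimension_of_free Ht eq_refl Hspan).
Qed.

Lemma dimension_le {U V a b} : dimension L U a -> dimension L V b -> subset U V -> a <= b.
Proof.
  intros HU HV HUV. destruct (dimension_basis HU) as [t [Ht [Hl Hspan]]].
  enough (length t <= S b) by lia. apply (free_length_le_dimension HV Ht).
  intros x Hx. apply HUV. rewrite <- Hspan. apply subset_closure, Hx.
Qed.

Lemma dimension_subset_eq {U V m} :
  dimension L U m -> dimension L V m -> subspace L V -> subset U V -> U = V.
Proof.
  intros HU HV HVs HUV. destruct (dimension_basis HU) as [t [Ht [Hl Hspan]]].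
  rewrite <- Hspan. apply (free_spans HV HVs Ht); [|exact Hl].
  intros x Hx. apply HUV. rewrite <- Hspan. apply subset_closure, Hx.
Qed.

Lemma dimension_adjoin {V m y} :
  dimension L V m -> ~ V y -> dimension L (closure L (adjoin V y)) (S m).
Proof.
  intros HV Hy. destruct (dimension_basis HV) as [t [Ht [Hl Hspan]]].
  apply (dimension_of_free (t := y :: t)).
  - apply (free_cons Ht). rewrite Hspan. exact Hy.
  - simpl. congruence.
  - rewrite closure_cons, Hspan. reflexivity.
Qed.

Lemma adjoin_inter {V a b y} :
  subspace L V -> ~ closure L (adjoin V a) b ->
  closure L (adjoin V a) y -> closure L (adjoin V b) y -> V y.
Proof.
  intros HV Hb Hya Hyb. apply NNPP. intro Hy. rewrite <- (closure_id HV) in Hy.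
  assert (HbV : ~ closure L V b).
  { intro HbV. apply Hb. revert HbV. apply closure_mono. intros v Hv. left. exact Hv. }
  apply Hb. generalize (EX V b y HbV Hy Hyb). apply closure_sub_closure.
  intros v [Hv | ->]; [apply subset_closure; left; exact Hv | exact Hya].
Qed.

End Exchange.

Section LinearSpace.

Context {P : Type} {L : (P -> Prop) -> Prop}.
Hypothesis LS : linear_space L.

Lemma line_unique {l1 l2 p q} :
  L l1 -> L l2 -> p <> q -> l1 p -> l1 q -> l2 p -> l2 q -> l1 = l2.
Proof.
  intros Hl1 Hl2 Hpq l1p l1q l2p l2q. destruct (proj2 (proj2 LS) p q Hpq) as [l [_ [_ [_ Hl]]]].
  apply set_ext. intro x. rewrite (Hl l1 Hl1 l1p l1q x), (Hl l2 Hl2 l2p l2q x). reflexivity.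
Qed.

Lemma line_through {p q} : p <> q -> exists l, L l /\ l p /\ l q.
Proof.
  intros Hpq. destruct (proj2 (proj2 LS) p q Hpq) as [l [Hl [lp [lq _]]]]. exists l. auto.
Qed.

Lemma line_subspace {l} : L l -> subspace L l.
Proof.
  intros Hl m p q Hm Hpq lp lq mp mq. rewrite (line_unique Hm Hl Hpq mp mq lp lq).
  intros x Hx. exact Hx.
Qed.

Lemma short_list_collinear {s a b c} :
  length s <= 2 -> a <> b -> a <> c -> b <> c ->
  closure L (list_set s) a -> closure L (list_set s) b -> closure L (list_set s) c ->
  collinear L a b c.
Proof.
  intros Hs Hab Hac Hbc Ha Hb Hc.
  assert (Hpoint : forall x, subset (list_set s) (fun v => v = x) -> collinear L a b c).
  { intros x Hsx. exfalso. apply Hab.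
    apply (closure_min (subspace_point (L := L) x)) in Hsx.
    rewrite (Hsx a Ha), (Hsx b Hb). reflexivity. }
  destruct s as [|x [|y [|z s]]]; simpl in Hs; [| | | lia].
  - apply (Hpoint a). intros v [].
  - apply (Hpoint x). intros v [<- | []]. reflexivity.
  - destruct (classic (x = y)) as [<- | Hxy].
    + apply (Hpoint x). intros v [<- | [<- | []]]; reflexivity.
    + destruct (line_through Hxy) as [l [Hl [lx ly]]].
      assert (Hsl : subset (closure L (list_set [x; y])) l).
      { apply (closure_min (line_subspace Hl)). intros v [<- | [<- | []]]; assumption. }
      exists l. auto.
Qed.

Lemma plane_dimension {a b c} :
  a <> b -> a <> c -> b <> c -> ~ collinear L a b c ->
  dimension L (closure L (list_set [a; b; c])) 2.
Proof.
  intros Hab Hac Hbc Habc. split.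
  - exists [a; b; c]. split; [repeat constructor; simpl; intuition|].
    split; [reflexivity | intro v; reflexivity].
  - intros s Hs. apply NNPP. intro Hlen. apply Habc.
    apply (short_list_collinear (s := s)); [lia | assumption | assumption | assumption | | |];
      apply (proj2 (Hs _)), subset_closure; simpl; auto.
Qed.

End LinearSpace.

Definition cone {P : Type} (L : (P -> Prop) -> Prop) (H : P -> Prop) (a : P) : P -> Prop :=
  fun w => w = a \/ exists h, H h /\ collinear L a h w.

Section Projective.

Context {P : Type} {L : (P -> Prop) -> Prop}.
Hypothesis PS : projective_space L.
Let LS : linear_space L := proj1 PS.

Lemma plane_line_meets_subspace {H g a h1 h2} :
  subspace L H -> ~ H a -> H h1 -> H h2 -> h1 <> h2 -> L g ->
  subset g (closure L (list_set [a; h1; h2])) -> exists z, g z /\ H z.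
Proof.
  intros HH Ha Hh1 Hh2 H12 Hg HgE.
  assert (Habc : ~ collinear L a h1 h2).
  { intros [m [Hm [ma [mh1 mh2]]]]. exact (Ha (HH m h1 h2 Hm H12 Hh1 Hh2 mh1 mh2 a ma)). }
  assert (Ha1 : a <> h1) by congruence. assert (Ha2 : a <> h2) by congruence.
  destruct (proj2 PS _ (closure_subspace _) (plane_dimension LS Ha1 Ha2 H12 Habc)) as [Hmeet _].
  destruct (line_through LS H12) as [k [Hk [kh1 kh2]]].
  assert (HkE : subset k (closure L (list_set [a; h1; h2]))).
  { apply (closure_subspace _ k h1 h2 Hk H12); [| | exact kh1 | exact kh2];
      apply subset_closure; simpl; auto. }
  destruct (Hmeet g k Hg Hk HgE HkE) as [z [gz kz]].
  exists z. split; [exact gz | exact (HH k h1 h2 Hk H12 Hh1 Hh2 kh1 kh2 z kz)].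
Qed.

Section Cone.

Variables (H : P -> Prop) (a : P).
Hypotheses (HH : subspace L H) (Ha : ~ H a).

Lemma cone_line_meets {w l} :
  cone L H a w -> w <> a -> L l -> l a -> l w -> exists h, H h /\ l h.
Proof.
  intros [-> | [h [Hh [m [Hm [ma [mh mw]]]]]]] Hwa Hl la lw; [contradiction|].
  exists h. split; [exact Hh|].
  rewrite (line_unique LS Hl Hm (not_eq_sym Hwa) la lw ma mw). exact mh.
Qed.

Lemma cone_subspace : subspace L (cone L H a).
Proof.
  intros l p q Hl Hpq Hp Hq lp lq x lx.
  destruct (classic (l a)) as [la | nla].
  - assert (Hcone_l : forall w, cone L H a w -> w <> a -> l w -> cone L H a x).
    { intros w Hw Hwa lw. destruct (cone_line_meets Hw Hwa Hl la lw) as [h [Hh lh]].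
      right. exists h. split; [exact Hh|]. exists l. auto. }
    destruct (classic (p = a)) as [-> | Hpa].
    + exact (Hcone_l q Hq (not_eq_sym Hpq) lq).
    + exact (Hcone_l p Hp Hpa lp).
  - destruct Hp as [-> | [h1 [Hh1 [m1 [Hm1 [m1a [m1h1 m1p]]]]]]]; [contradiction|].
    destruct Hq as [-> | [h2 [Hh2 [m2 [Hm2 [m2a [m2h2 m2q]]]]]]]; [contradiction|].
    assert (Hah1 : a <> h1) by congruence. assert (Hah2 : a <> h2) by congruence.
    destruct (classic (h1 = h2)) as [<- | H12].
    { exfalso. apply nla.
      rewrite (line_unique LS Hm1 Hm2 Hah1 m1a m1h1 m2a m2h2) in m1p.
      rewrite (line_unique LS Hl Hm2 Hpq lp lq m1p m2q). exact m2a. }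
    set (E := closure L (list_set [a; h1; h2])).
    assert (HE : subspace L E) by apply closure_subspace.
    assert (Ea : E a) by (apply subset_closure; simpl; auto).
    assert (Eh1 : E h1) by (apply subset_closure; simpl; auto).
    assert (Eh2 : E h2) by (apply subset_closure; simpl; auto).
    assert (HlE : subset l E).
    { apply (HE l p q Hl Hpq); [ | | exact lp | exact lq].
      - exact (HE m1 a h1 Hm1 Hah1 Ea Eh1 m1a m1h1 p m1p).
      - exact (HE m2 a h2 Hm2 Hah2 Ea Eh2 m2a m2h2 q m2q). }
    assert (Hax : a <> x) by (intros ->; contradiction).
    destruct (line_through LS Hax) as [g [Hg [ga gx]]].
    assert (HgE : subset g E) by exact (HE g a x Hg Hax Ea (HlE x lx) ga gx).
    destruct (plane_line_meets_subspace HH Ha Hh1 Hh2 H12 Hg HgE) as [z [gz Hz]].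
    right. exists z. split; [exact Hz|]. exists g. auto.
Qed.

Lemma join_line_meets {y l} :
  closure L (adjoin H a) y -> y <> a -> L l -> l a -> l y -> exists h, H h /\ l h.
Proof.
  intros Hy. apply cone_line_meets.
  apply (closure_min (X := adjoin H a) cone_subspace); [|exact Hy].
  intros v [Hv | ->]; [right | left; reflexivity].
  assert (Hav : a <> v) by (intros ->; contradiction).
  destruct (line_through LS Hav) as [m [Hm [ma mv]]].
  exists v. split; [exact Hv|]. exists m. auto.
Qed.

End Cone.

Lemma exchange_of_projective : exchange_axiom L.
Proof.
  intros X p1 p2 H1 H2 H12.
  destruct (classic (p1 = p2)) as [<- | Hne]; [apply subset_closure; right; reflexivity|].
  destruct (line_through LS Hne) as [l [Hl [lp1 lp2]]].
  assert (H12' : closure L (adjoin (closure L X) p1) p2).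
  { revert H12. apply closure_mono.
    intros v [Hv | ->]; [left; apply subset_closure, Hv | right; reflexivity]. }
  destruct (join_line_meets _ _ (closure_subspace X) H1 H12' (not_eq_sym Hne) Hl lp1 lp2)
    as [h [Hh lh]].
  assert (Hp2h : p2 <> h) by (intros ->; contradiction).
  apply (closure_subspace _ l p2 h Hl Hp2h); [| | exact lp2 | exact lh | exact lp1].
  - apply subset_closure. right. reflexivity.
  - revert Hh. apply closure_mono. intros v Hv. left. exact Hv.
Qed.

Lemma dimension_inter_adjoin {n U V k x} :
  dimension L (@whole P) n -> subspace L U -> subspace L V -> dimension L U (S k) ->
  U x -> ~ V x -> subset U (closure L (adjoin V x)) ->
  dimension L (fun v => U v /\ V v) k.
Proof.
  intros Hn HU HV DU Ux Vx HUVx.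
  pose proof exchange_of_projective as EX.
  set (I := fun v => U v /\ V v).
  assert (HUI : subset U (closure L (adjoin I x))).
  { intros y Uy. destruct (classic (y = x)) as [-> | Hyx].
    { apply subset_closure. right. reflexivity. }
    destruct (line_through LS (not_eq_sym Hyx)) as [l [Hl [lx ly]]].
    assert (HlU : subset l U) by exact (HU l x y Hl (not_eq_sym Hyx) Ux Uy lx ly).
    destruct (join_line_meets V x HV Vx (HUVx y Uy) Hyx Hl lx ly) as [z [Vz lz]].
    assert (Hzx : z <> x) by (intros ->; contradiction).
    apply (closure_subspace _ l z x Hl Hzx); [| | exact lz | exact lx | exact ly];
      apply subset_closure; [left; split; [apply HlU, lz | exact Vz] | right; reflexivity]. }
  destruct (subspace_basis EX Hn (subspace_inter HU HV)) as [t [Ht Hspan]].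
  assert (HUt : closure L (list_set (x :: t)) = U).
  { rewrite closure_cons, Hspan. apply set_ext. intro v. split; [|apply HUI].
    apply (closure_min HU). intros w [[Uw _] | ->]; assumption. }
  assert (Hxt : free L (x :: t)).
  { apply (free_cons EX Ht). rewrite Hspan. intros [_ Vx']. contradiction. }
  pose proof (dimension_unique DU (dimension_of_free EX Hxt eq_refl HUt)) as Hlen.
  exact (dimension_of_free EX Ht (eq_sym Hlen) Hspan).
Qed.

End Projective.

Section Embedding.

Context {P P' : Type} {L : (P -> Prop) -> Prop} {L' : (P' -> Prop) -> Prop} {f : P -> P'}.
Hypothesis SE : strong_embedding L L' f.

Lemma preimage_subspace {T} : subspace L' T -> subspace L (fun x => T (f x)).
Proof.
  intros HT l p q Hl Hpq Tp Tq lp lq x lx. destruct SE as [Hinj [Hcol _]].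
  destruct (Hcol p q x (ex_intro _ l (conj Hl (conj lp (conj lq lx)))))
    as [m [Hm [mp [mq mx]]]].
  assert (Hfpq : f p <> f q) by (intro E; apply Hpq, Hinj, E).
  exact (HT m (f p) (f q) Hm Hfpq Tp Tq mp mq (f x) mx).
Qed.

Lemma image_closure_subset {X T} :
  subspace L' T -> subset (image f X) T -> subset (image f (closure L X)) T.
Proof.
  intros HT HXT y [x [Hx <-]].
  refine (closure_min (preimage_subspace HT) _ x Hx).
  intros v Hv. apply HXT. exists v. auto.
Qed.

Hypothesis EX' : exchange_axiom L'.

Lemma dimension_image {U d} : dimension L U d -> dimension L' (closure L' (image f U)) d.
Proof.
  intros HU. destruct SE as [Hinj [_ [_ Hind]]].
  pose proof HU as [[s [Hs [Hl Hspan]]] _]. apply set_ext in Hspan.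
  assert (Himg : image f (list_set s) = list_set (map f s)).
  { apply set_ext. intro y. unfold image, list_set. rewrite in_map_iff. firstorder. }
  apply (dimension_of_free EX' (t := map f s)).
  - apply independent_free.
    + apply NoDup_map_NoDup_ForallPairs; [|exact Hs]. intros a b _ _. apply Hinj.
    + rewrite <- Himg. exact (Hind _ (spanning_list_independent HU Hs Hl Hspan)).
  - rewrite length_map. exact Hl.
  - rewrite <- Himg, <- Hspan. apply closure_eq.
    + intros y [x [Hx <-]]. apply subset_closure.
      exists x. split; [apply subset_closure, Hx | reflexivity].
    + apply (image_closure_subset (closure_subspace _)), subset_closure.
Qed.

Lemma dimension_le_of_image {U d T e} :
  dimension L U d -> subspace L' T -> dimension L' T e -> subset (image f U) T -> d <= e.
Proof.
  intros DU HT DT HUT.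
  exact (dimension_le EX' (dimension_image DU) DT (closure_min HT HUT)).
Qed.

End Embedding.

Section Collineation.

Context {P P' : Type} {L : (P -> Prop) -> Prop} {L' : (P' -> Prop) -> Prop} {f : P -> P'}.
Hypotheses (LS : linear_space L) (LS' : linear_space L') (SE : strong_embedding L L' f).
Hypothesis Hsurj : forall y, exists x, f x = y.

Lemma image_line {l l' p q} :
  L l -> L' l' -> p <> q -> l p -> l q -> l' (f p) -> l' (f q) -> set_eq (image f l) l'.
Proof.
  intros Hl Hl' Hpq lp lq l'p l'q. destruct SE as [Hinj [Hcol [Hncol _]]].
  assert (Hfpq : f p <> f q) by (intro E; apply Hpq, Hinj, E).
  intro y. split.
  - intros [x [lx <-]].
    destruct (Hcol p q x (ex_intro _ l (conj Hl (conj lp (conj lq lx)))))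
      as [m [Hm [mp [mq mx]]]].
    rewrite <- (line_unique LS' Hm Hl' Hfpq mp mq l'p l'q). exact mx.
  - intros l'y. destruct (Hsurj y) as [x <-]. exists x. split; [|reflexivity].
    assert (Hpqx : collinear L p q x).
    { apply NNPP. intro Hn. apply (Hncol p q x Hn). exists l'. auto. }
    destruct Hpqx as [m [Hm [mp [mq mx]]]].
    rewrite <- (line_unique LS Hm Hl Hpq mp mq lp lq). exact mx.
Qed.

Lemma collineation_of_surjective : collineation L L' f.
Proof.
  pose proof (proj1 SE) as Hinj.
  split; [exact Hinj|]. split; [exact Hsurj|]. split.
  - intros l Hl. destruct (proj1 (proj2 LS) l Hl) as [p [q [Hpq [lp lq]]]].
    assert (Hfpq : f p <> f q) by (intro E; apply Hpq, Hinj, E).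
    destruct (line_through LS' Hfpq) as [l' [Hl' [l'p l'q]]].
    exists l'. split; [exact Hl' | exact (image_line Hl Hl' Hpq lp lq l'p l'q)].
  - intros l' Hl'. destruct (proj1 (proj2 LS') l' Hl') as [y1 [y2 [Hy [l'y1 l'y2]]]].
    destruct (Hsurj y1) as [p <-]. destruct (Hsurj y2) as [q <-].
    assert (Hpq : p <> q) by (intros ->; contradiction).
    destruct (line_through LS Hpq) as [l [Hl [lp lq]]].
    exists l. split; [exact Hl | exact (image_line Hl Hl' Hpq lp lq l'y1 l'y2)].
Qed.

End Collineation.

Definition Gk_surjective {P P' : Type} (L : (P -> Prop) -> Prop) (L' : (P' -> Prop) -> Prop)
  (f : P -> P') (k : nat) : Prop :=
  forall T, subspace L' T -> dimension L' T k ->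
    exists U, subspace L U /\ dimension L U k /\ set_eq (closure L' (image f U)) T.

Section Grassmann.

Context {P P' : Type} {L : (P -> Prop) -> Prop} {L' : (P' -> Prop) -> Prop} {f : P -> P'}.
Context {n : nat}.
Hypotheses (PS : projective_space L) (Hn : dimension L (@whole P) n).
Hypotheses (EX' : exchange_axiom L') (Hn' : dimension L' (@whole P') n).
Hypothesis SE : strong_embedding L L' f.
Let EX : exchange_axiom L := exchange_of_projective PS.

Lemma subset_adjoin_of_image {U1 U2 T k x} :
  dimension L U1 (S k) -> ~ U1 x -> U2 x ->
  subspace L' T -> dimension L' T (S (S k)) -> subset (image f (fun v => U1 v \/ U2 v)) T ->
  subset U2 (closure L (adjoin U1 x)).
Proof.
  intros DU1 U1x U2x HT DT HfT.
  set (W := closure L (fun v => U1 v \/ U2 v)).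
  destruct (subspace_dimension EX Hn (closure_subspace _)
              (subset_closure (fun v => U1 v \/ U2 v) x (or_intror U2x)))
    as [d DW].
  assert (DU1x : dimension L (closure L (adjoin U1 x)) (S (S k)))
    by exact (dimension_adjoin EX DU1 U1x).
  assert (HU1xW : subset (closure L (adjoin U1 x)) W)
    by (apply closure_mono; intros v [U1v | ->]; [left | right]; assumption).
  assert (Hd : d = S (S k)).
  { pose proof (dimension_le EX DU1x DW HU1xW).
    pose proof (dimension_le_of_image SE EX' DW HT DT (image_closure_subset SE HT HfT)).
    lia. }
  subst d. rewrite (dimension_subset_eq EX DU1x DW (closure_subspace _) HU1xW).
  intros v U2v. apply subset_closure. right. exact U2v.
Qed.

Lemma Gk_surjective_pred {k} : S k < n -> Gk_surjective L L' f (S k) -> Gk_surjective L L' f k.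
Proof.
  intros Hk Hsurj V' HV' DV'.
  destruct (dimension_lt_whole Hn' DV' (ltac:(lia) : k < n)) as [a' Ha'].
  set (T1 := closure L' (adjoin V' a')).
  assert (DT1 : dimension L' T1 (S k)) by exact (dimension_adjoin EX' DV' Ha').
  destruct (dimension_lt_whole Hn' DT1 Hk) as [b' Hb'].
  set (T2 := closure L' (adjoin V' b')).
  assert (DT2 : dimension L' T2 (S k)).
  { apply (dimension_adjoin EX' DV'). intro V'b'. apply Hb', subset_closure. left. exact V'b'. }
  destruct (Hsurj T1 (closure_subspace _) DT1) as [U1 [HU1 [DU1 E1]]]. apply set_ext in E1.
  destruct (Hsurj T2 (closure_subspace _) DT2) as [U2 [HU2 [DU2 E2]]]. apply set_ext in E2.
  assert (HfU1 : forall v, U1 v -> T1 (f v))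
    by (intros v Hv; rewrite <- E1; apply subset_closure; exists v; auto).
  assert (HfU2 : forall v, U2 v -> T2 (f v))
    by (intros v Hv; rewrite <- E2; apply subset_closure; exists v; auto).
  assert (Hx : exists x, U2 x /\ ~ U1 x).
  { apply NNPP. intro Hno. apply Hb'.
    assert (E : U2 = U1).
    { apply (dimension_subset_eq EX DU2 DU1 HU1). intros v U2v.
      apply NNPP. intro U1v. apply Hno. exists v. auto. }
    rewrite <- E1, <- E, E2. apply subset_closure. right. reflexivity. }
  destruct Hx as [x [U2x U1x]].
  assert (HU2U1x : subset U2 (closure L (adjoin U1 x))).
  { apply (subset_adjoin_of_image DU1 U1x U2x (closure_subspace (adjoin T1 b'))
             (dimension_adjoin EX' DT1 Hb')).
    intros y [v [[U1v | U2v] <-]].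
    - apply subset_closure. left. exact (HfU1 v U1v).
    - generalize (HfU2 v U2v). apply closure_sub_closure.
      intros w [V'w | ->]; apply subset_closure; [left; apply subset_closure; left | right]; auto. }
  assert (DI := dimension_inter_adjoin PS Hn HU2 HU1 DU2 U2x U1x HU2U1x).
  exists (fun v => U2 v /\ U1 v). split; [exact (subspace_inter HU2 HU1)|]. split; [exact DI|].
  assert (Himg : closure L' (image f (fun v => U2 v /\ U1 v)) = V').
  { apply (dimension_subset_eq EX' (dimension_image SE EX' DI) DV' HV').
    apply (closure_min HV'). intros y [v [[U2v U1v] <-]].
    exact (adjoin_inter EX' HV' Hb' (HfU1 v U1v) (HfU2 v U2v)). }
  rewrite Himg. intro y. reflexivity.
Qed.

Lemma surjective_of_Gk_surjective {k} :
  k < n -> Gk_surjective L L' f k -> forall y, exists x, f x = y.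
Proof.
  intros Hk Hsurj y.
  assert (Hsurj0 : Gk_surjective L L' f 0).
  { induction k as [|k IH]; [exact Hsurj|].
    apply IH; [lia | exact (Gk_surjective_pred Hk Hsurj)]. }
  destruct (Hsurj0 _ (subspace_point y) (dimension_point y)) as [U [_ [DU HU]]].
  destruct (dimension_nonempty DU) as [x Ux].
  exists x. apply (proj1 (HU (f x))), subset_closure. exists x. auto.
Qed.

End Grassmann.

Theorem proposition2p4 (P P' : Type) (L : (P -> Prop) -> Prop)
  (L' : (P' -> Prop) -> Prop) (n : nat) (f : P -> P') :
  projective_space L -> dimension L (@whole P) n ->
  linear_space L' -> dimension L' (@whole P') n -> exchange_axiom L' ->
  strong_embedding L L' f ->
  (exists k, k < n /\ Gk_bijective L L' f k) ->
  collineation L L' f.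
Proof.
  (* Only the surjectivity half of the bijectivity of G_k(f) is needed. *)
  intros PS Hn LS' Hn' EX' SE [k [Hk [_ Hsurj]]].
  apply (collineation_of_surjective (proj1 PS) LS' SE).
  exact (surjective_of_Gk_surjective PS Hn EX' Hn' SE Hk Hsurj).
Qed.
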